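(* For all integers $0 \le r \le m$ for which $H(r,m)$ is defined below, $H(r,m)$ is a generator matrix for the Reed–Muller code $\mathcal{R}(r,m)$ and hence a parity-check matrix for $\mathcal{R}(m-r-1,m)$.
   Context: All matrices are binary. The matrices $G(r,m)$, $0\le r\le m$, are defined recursively by $G(m,m) = I_{2^m}$ (identity), $G(0,m) = (11\cdots1)$ (all-ones row of length $2^m$), and for $0<r<m$, $$G(r,m) = \begin{pmatrix} G(r,m-1) & G(r,m-1) \\ \mathbf{0} & G(r-1,m-1)\end{pmatrix}.$$ The binary Reed–Muller code $\mathcal{R}(r,m)$ of order $r$ and length $2^m$ is the row space of $G(r,m)$; by convention $\mathcal{R}(-1,m)=\{\mathbf 0\}$, and $\mathcal{R}(r,m)^\perp = \mathcal{R}(m-r-1,m)$. A parity-check matrix for a code $\mathcal{C}$ is any matrix whose rows span $\mathcal{C}^\perp$. The matrices $H(r,m)$ are defined as follows: for all $m \ge 0$, $H(0,m) = (11\cdots1)$ (length $2^m$), $H(m-1,m) = G(m-1,m)$, $H(m,m) = I_{2^m}$; and for all positive integers $m$ and $r = 1,2,\ldots,m-2$, $$H(r,m) = \begin{pmatrix} H(r,m-1) & H(r,m-1) \\ \mathbf{0} & H(r-1,m-1) \\ H(r-1,m-1) & \mathbf{0}\end{pmatrix}.$$ *)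

(* Binary matrices are represented as lists of rows,
   each row a list of elements of 'F_2 (of length 2^m); the row space
   is taken through MathComp's matrix algebra (mxalgebra). *)
From mathcomp Require Import all_boot all_order all_algebra.
Unset Printing Implicit Defensive.
Import GRing.Theory.
Local Open Scope ring_scope.

Definition bmat := seq (seq 'F_2).

Definition idrows (m : nat) : bmat :=
  [seq [seq ((i == j)%:R : 'F_2) | j <- iota 0 (2 ^ m)%N] | i <- iota 0 (2 ^ m)%N].

Definition onesrow (m : nat) : bmat := [:: nseq (2 ^ m)%N (1 : 'F_2)].

Definition blk_AA_0B (n : nat) (A B : bmat) : bmat :=
  [seq x ++ x | x <- A] ++ [seq nseq n (0 : 'F_2) ++ x | x <- B].

(* G(r,m); values for r > m are irrelevant (never used) *)
Fixpoint Gm (r m : nat) : bmat :=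
  match m with
  | 0 => idrows 0
  | m'.+1 =>
      if r == m'.+1 then idrows m'.+1
      else if r == 0%N then onesrow m'.+1
      else blk_AA_0B (2 ^ m')%N (Gm r m') (Gm r.-1 m')
  end.

Fixpoint Hm (r m : nat) : bmat :=
  match m with
  | 0 => onesrow 0
  | m'.+1 =>
      if r == 0%N then onesrow m'.+1
      else if r == m'.+1 then idrows m'.+1
      else if r == m' then Gm m' m'.+1
      else blk_AA_0B (2 ^ m')%N (Hm r m') (Hm r.-1 m')
           ++ [seq x ++ nseq (2 ^ m')%N (0 : 'F_2) | x <- Hm r.-1 m']
  end.

Definition mxof (n : nat) (M : bmat) : 'M['F_2]_(size M, n) :=
  \matrix_(i < size M, j < n) (nth [::] M i)`_j.

Definition code (n : nat) := 'rV['F_2]_n -> Prop.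

Definition rowspace (n : nat) (M : bmat) : code n :=
  fun v => (v <= mxof n M)%MS.

Definition RM (r : int) (m : nat) : code (2 ^ m)%N :=
  match r with
  | Posz k => rowspace (2 ^ m)%N (Gm k m)
  | Negz _ => fun v => v = 0
  end.

Definition dual (n : nat) (C : code n) : code n :=
  fun v => forall c : 'rV['F_2]_n, C c -> v *m c^T = 0.

Definition generator_matrix (n : nat) (M : bmat) (C : code n) : Prop :=
  forall v, rowspace n M v <-> C v.

Definition parity_check_matrix (n : nat) (M : bmat) (C : code n) : Prop :=
  forall v, rowspace n M v <-> dual n C v.

From mathcomp Require Import all_boot all_order all_algebra.
From mathcomp Require Import zify.
Set Implicit Arguments. Unset Strict Implicit. Unset Printing Implicit Defensive.
Import GRing.Theory.
Local Open Scope ring_scope.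

(* Over F_2 the recursion defining G(r,m) is Plotkin's (u | u+v) construction:
   R(r,m+1) = {(u, u+v) : u in R(r,m), v in R(r-1,m)}.  Extending R(k,m) to every
   integer k, as {0} for k < 0 and the whole space for k >= m, makes this recursion
   hold uniformly, so everything follows by induction on m.
   The rows (v | 0), v in R(r-1,m), that H(r,m+1) adds to the Plotkin matrix lie in
   the Plotkin code because R(r-1,m) is contained in R(r,m); hence H(r,m) and G(r,m)
   have the same row space.
   A word (a | b) is orthogonal to the Plotkin code of (A, B) iff a+b is orthogonal
   to A and b to B.  By induction, with s = m-k, this says that a+b is in R(s-1,m) and
   b in R(s,m), which (as R(s-1,m) is contained in R(s,m)) is the membership of
   (a | b) in R(s,m+1): the dual of R(k,m) is R(m-k-1,m). *)

Section Plotkin.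
Variable F : fieldType.

Definition perpmx p q n (a : 'M[F]_(p, n)) (B : 'M[F]_(q, n)) := a *m B^T == 0.

Definition plotkin_mx p q n (A : 'M[F]_(p, n)) (B : 'M[F]_(q, n)) : 'M_(p + q, n + n) :=
  col_mx (row_mx A A) (row_mx 0 B).

Lemma perpmxS p q1 q2 n (a : 'M[F]_(p, n)) (B : 'M_(q1, n)) (C : 'M_(q2, n)) :
  (B <= C)%MS -> perpmx a C -> perpmx a B.
Proof.
by case/submxP=> D ->; rewrite /perpmx trmx_mul mulmxA => /eqP->; rewrite mul0mx.
Qed.

Lemma eqmx_perpmx p q1 q2 n (a : 'M[F]_(p, n)) (B : 'M_(q1, n)) (C : 'M_(q2, n)) :
  (B :=: C)%MS -> perpmx a B = perpmx a C.
Proof. by move=> eqBC; apply/idP/idP; apply: perpmxS; rewrite eqBC. Qed.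

Lemma perpmx1 p n (a : 'M[F]_(p, n)) : perpmx a 1%:M = (a == 0).
Proof. by rewrite /perpmx trmx1 mulmx1. Qed.

Lemma perpmx0 p q n (a : 'M[F]_(p, n)) : perpmx a (0 : 'M_(q, n)).
Proof. by rewrite /perpmx trmx0 mulmx0. Qed.

Section PlotkinRows.
Variables (p q1 q2 n : nat) (a b : 'M[F]_(p, n)) (A : 'M[F]_(q1, n)) (B : 'M[F]_(q2, n)).

Lemma row_mx_sub_plotkin :
  (row_mx a b <= plotkin_mx A B)%MS = (a <= A)%MS && (b - a <= B)%MS.
Proof.
apply/idP/andP=> [|[/submxP[D ->] /submxP[E sub_b]]].
  case/submxP=> D; rewrite -[D]hsubmxK mul_row_col !mul_mx_row mulmx0 add_row_mx.
  by rewrite addr0 => /eq_row_mx[-> ->]; rewrite submxMl addrC addKr submxMl.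
apply/submxP; exists (row_mx D E).
by rewrite mul_row_col !mul_mx_row mulmx0 add_row_mx addr0 -sub_b addrC subrK.
Qed.

Lemma perpmx_plotkin :
  perpmx (row_mx a b) (plotkin_mx A B) = perpmx (a + b) A && perpmx b B.
Proof.
rewrite /perpmx tr_col_mx !tr_row_mx trmx0 mul_mx_row !mul_row_col.
by rewrite mulmx0 add0r mulmxDl row_mx_eq0.
Qed.

End PlotkinRows.

Lemma plotkin_mx0 p q n (A : 'M[F]_(p, n)) :
  (plotkin_mx A (0 : 'M_(q, n)) :=: row_mx A A)%MS.
Proof.
apply: eqmx_trans (eqmx_sym (addsmxE _ _)) _.
by rewrite row_mx0; apply/addsmx_idPl; rewrite sub0mx.
Qed.

Lemma plotkin_eqmx p1 p2 q1 q2 n (A1 : 'M[F]_(p1, n)) (A2 : 'M_(p2, n))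
    (B1 : 'M_(q1, n)) (B2 : 'M_(q2, n)) :
  (A1 :=: A2)%MS -> (B1 :=: B2)%MS -> (plotkin_mx A1 B1 :=: plotkin_mx A2 B2)%MS.
Proof.
move=> eqA eqB; apply/eqmxP/rV_eqP=> u; rewrite -[u]hsubmxK !row_mx_sub_plotkin.
by rewrite eqA eqB.
Qed.

Lemma addmx_sub_eq p q n (a b : 'M[F]_(p, n)) (C : 'M_(q, n)) :
  ((a + b)%R <= C)%MS -> (a <= C)%MS = (b <= C)%MS.
Proof.
move=> sub_ab; apply/idP/idP=> [sub_a | sub_b].
  by rewrite -(addKr a b) addmx_sub // eqmx_opp.
by rewrite -(addrK b a) addmx_sub // eqmx_opp.
Qed.

Lemma row_mx_sub_dup p q n (a b : 'M[F]_(p, n)) (A : 'M_(q, n)) :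
  (row_mx a b <= row_mx A A)%MS = (a <= A)%MS && (b - a == 0).
Proof. by rewrite -submx0 -row_mx_sub_plotkin plotkin_mx0. Qed.

Section ColumnCast.
Variables (p q n1 n2 : nat) (E : n1 = n2) (a : 'M[F]_(p, n1)) (B : 'M[F]_(q, n1)).

Lemma castmx_col_submx :
  (castmx (erefl, E) a <= castmx (erefl, E) B)%MS = (a <= B)%MS.
Proof. by case: n2 / E; rewrite !castmx_id. Qed.

Lemma castmx_col_eqmx :
  (a :=: B)%MS -> (castmx (erefl, E) a :=: castmx (erefl, E) B)%MS.
Proof. by case: n2 / E; rewrite !castmx_id. Qed.

Lemma castmx_col_perpmx :
  perpmx (castmx (erefl, E) a) (castmx (erefl, E) B) = perpmx a B.
Proof. by case: n2 / E; rewrite !castmx_id. Qed.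

Lemma castmx_col_eq0 : (castmx (erefl, E) a == 0) = (a == 0).
Proof. by case: n2 / E; rewrite !castmx_id. Qed.

End ColumnCast.

End Plotkin.

Lemma oppmx_F2 p n (A : 'M['F_2]_(p, n)) : - A = A.
Proof. by rewrite -scaleN1r (_ : -1 = 1 :> 'F_2) ?scale1r //; apply/val_inj. Qed.

Definition mxof_fun n (h : seq 'F_2 -> seq 'F_2) (A : bmat) : 'M['F_2]_(size A, n) :=
  \matrix_(i < size A, j < n) (h (nth [::] A i))`_j.

Definition rows_size n (M : bmat) := {in M, forall x, size x = n}.

Lemma mxof_map n h A : (mxof n (map h A) :=: mxof_fun n h A)%MS.
Proof.
have eq_size : size A = size (map h A) by rewrite size_map.
suff -> : mxof n (map h A) = castmx (eq_size, erefl) (mxof_fun n h A) by apply: eqmx_cast.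
apply/matrixP=> i j; rewrite castmxE !mxE /= (nth_map [::]) //.
by rewrite eq_size.
Qed.

Lemma mxof_cat n A B : (mxof n (A ++ B) :=: mxof n A + mxof n B)%MS.
Proof.
have eq_size : (size A + size B)%N = size (A ++ B) by rewrite size_cat.
apply: eqmx_trans _ (eqmx_sym (addsmxE _ _)).
suff -> : mxof n (A ++ B) = castmx (eq_size, erefl) (col_mx (mxof n A) (mxof n B)).
  exact: eqmx_cast.
apply/matrixP=> i j; rewrite castmxE !mxE /=.
case: splitP=> k /= ->; rewrite !mxE /= nth_cat ?ltn_ord //.
by rewrite ltnNge leq_addr /= addKn.
Qed.

Lemma mxof_fun_cat n1 n2 f g A : {in A, forall x, size (f x) = n1} ->
  mxof_fun (n1 + n2) (fun x => f x ++ g x) A = row_mx (mxof_fun n1 f A) (mxof_fun n2 g A).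
Proof.
move=> size_f; apply/matrixP=> i j; rewrite !mxE.
rewrite nth_cat size_f ?mem_nth //.
by case: splitP=> k /= ->; rewrite !mxE ?addKn.
Qed.

Lemma mxof_fun_nseq0 n A : mxof_fun n (fun=> nseq n 0) A = 0.
Proof. by apply/matrixP=> i j; rewrite !mxE nth_nseq if_same. Qed.

Lemma mxof_dup n A : rows_size n A ->
  (mxof (n + n) [seq x ++ x | x <- A] :=: row_mx (mxof n A) (mxof n A))%MS.
Proof.
move=> sizeA; apply: eqmx_trans (mxof_map _ _ _) _.
by rewrite (@mxof_fun_cat n n id id).
Qed.

Lemma mxof_pad_left n A :
  (mxof (n + n) [seq nseq n 0 ++ x | x <- A] :=: row_mx 0 (mxof n A))%MS.
Proof.
apply: eqmx_trans (mxof_map _ _ _) _.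
rewrite (@mxof_fun_cat n n (fun=> nseq n 0) id) ?mxof_fun_nseq0 //.
by move=> x _; rewrite size_nseq.
Qed.

Lemma mxof_pad_right n A : rows_size n A ->
  (mxof (n + n) [seq x ++ nseq n 0 | x <- A] :=: row_mx (mxof n A) 0)%MS.
Proof.
move=> sizeA; apply: eqmx_trans (mxof_map _ _ _) _.
by rewrite (@mxof_fun_cat n n id (fun=> nseq n 0)) ?mxof_fun_nseq0.
Qed.

Lemma mxof_blk n A B : rows_size n A ->
  (mxof (n + n) (blk_AA_0B n A B) :=: plotkin_mx (mxof n A) (mxof n B))%MS.
Proof.
move=> sizeA; apply: eqmx_trans (mxof_cat _ _ _) _.
apply: eqmx_trans (addsmxE _ _).
exact: adds_eqmx (mxof_dup sizeA) (mxof_pad_left _ _).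
Qed.

Lemma exp2S m : (2 ^ m + 2 ^ m = 2 ^ m.+1)%N.
Proof. by rewrite expnS mul2n addnn. Qed.

Lemma mxof_exp2S m M :
  mxof (2 ^ m.+1) M = castmx (erefl, exp2S m) (mxof (2 ^ m + 2 ^ m) M).
Proof. by case: _ / exp2S; rewrite castmx_id. Qed.

Lemma mxof_idrows m : (mxof (2 ^ m) (idrows m) :=: (1%:M : 'M['F_2]_(2 ^ m)))%MS.
Proof.
have eq_size : (2 ^ m)%N = size (idrows m) by rewrite size_map size_iota.
suff -> : mxof (2 ^ m) (idrows m) = castmx (eq_size, erefl) 1%:M by apply: eqmx_cast.
apply/matrixP=> i j; rewrite castmxE !mxE /=.
have lt_i : (i < 2 ^ m)%N by rewrite [X in (_ < X)%N]eq_size.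
by rewrite (nth_map 0%N) ?size_iota // nth_iota // (nth_map 0%N) ?size_iota ?nth_iota.
Qed.

Lemma Gm_id m : Gm m m = idrows m.
Proof. by case: m => //= m; rewrite eqxx. Qed.

Lemma Gm0 m : Gm 0 m = onesrow m.
Proof. by case: m. Qed.

Lemma GmS r m : (r < m)%N -> Gm r.+1 m.+1 = blk_AA_0B (2 ^ m) (Gm r.+1 m) (Gm r m).
Proof. by move=> lt_r_m; rewrite /= eqSS ltn_eqF. Qed.

Lemma HmS r m : (r.+1 < m)%N ->
  Hm r.+1 m.+1 = blk_AA_0B (2 ^ m) (Hm r.+1 m) (Hm r m)
                  ++ [seq x ++ nseq (2 ^ m) 0 | x <- Hm r m].
Proof. by move=> lt_r1_m; rewrite /= eqSS !ltn_eqF // ltnW. Qed.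

Lemma onesrowS m : onesrow m.+1 = [seq x ++ x | x <- onesrow m].
Proof. by rewrite /onesrow /= -exp2S nseqD. Qed.

Lemma rows_size_idrows m : rows_size (2 ^ m) (idrows m).
Proof. by move=> x /mapP[i _ ->]; rewrite size_map size_iota. Qed.

Lemma rows_size_onesrow m : rows_size (2 ^ m) (onesrow m).
Proof. by move=> x; rewrite inE => /eqP->; rewrite size_nseq. Qed.

Lemma rows_size_blk n A B :
  rows_size n A -> rows_size n B -> rows_size (n + n) (blk_AA_0B n A B).
Proof.
move=> sizeA sizeB x; rewrite mem_cat => /orP[] /mapP[y y_in ->]; rewrite size_cat.
  by rewrite sizeA.
by rewrite size_nseq sizeB.
Qed.

Lemma rows_size_Gm r m : rows_size (2 ^ m) (Gm r m).
Proof.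
elim: m r => [|m IHm] r /=; first exact: rows_size_idrows.
case: ifP => _; first exact: rows_size_idrows.
case: ifP => _; first exact: rows_size_onesrow.
by rewrite -exp2S; apply: rows_size_blk.
Qed.

Lemma rows_size_Hm r m : rows_size (2 ^ m) (Hm r m).
Proof.
elim: m r => [|m IHm] r /=; first exact: rows_size_onesrow.
case: ifP => _; first exact: rows_size_onesrow.
case: ifP => _; first exact: rows_size_idrows.
case: ifP => _; first exact: rows_size_Gm.
rewrite -exp2S => x; rewrite mem_cat => /orP[]; first exact: rows_size_blk.
by case/mapP=> y y_in ->; rewrite size_cat (IHm r.-1) ?size_nseq.
Qed.

Definition RMmx (k : int) m : 'M['F_2]_(2 ^ m) :=
  match k with
  | Posz k => if (m <= k)%N then 1%:M else <<mxof (2 ^ m) (Gm k m)>>%MS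
  | Negz _ => 0
  end.

Lemma RMmxE k m : (k <= m)%N -> (RMmx k m :=: mxof (2 ^ m) (Gm k m))%MS.
Proof.
move=> le_k_m; rewrite /RMmx; case: leqP => [le_m_k | _]; last exact: genmxE.
have -> : k = m by apply/eqP; rewrite eqn_leq le_k_m.
by rewrite Gm_id; apply: eqmx_sym; apply: mxof_idrows.
Qed.

Lemma split_rV_exp2S m (v : 'rV['F_2]_(2 ^ m.+1)) :
  exists a b, v = castmx (erefl, exp2S m) (row_mx a b).
Proof.
set w := castmx (esym (erefl 1%N), esym (exp2S m)) v.
by exists (lsubmx w), (rsubmx w); rewrite hsubmxK castmxKV.
Qed.

Lemma RMmx_split k m (a b : 'rV['F_2]_(2 ^ m)) :
  (castmx (erefl, exp2S m) (row_mx a b) <= RMmx k m.+1)%MS =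
  (a <= RMmx k m)%MS && (b - a <= RMmx (k - 1) m)%MS.
Proof.
case: k => [[|k]|k].
- rewrite (_ : 0 - 1 = Negz 0) // !RMmxE // !Gm0 /RMmx submx0.
  rewrite onesrowS mxof_exp2S castmx_col_submx.
  by rewrite (mxof_dup (@rows_size_onesrow m)) row_mx_sub_dup.
- rewrite (_ : k.+1%:Z - 1 = k); last by lia.
  have [le_m_k | lt_k_m] := leqP m k; first by rewrite /RMmx ltnS le_m_k leqW ?submx1.
  rewrite !RMmxE ?ltnS ?(ltnW lt_k_m) // GmS // mxof_exp2S castmx_col_submx.
  by rewrite (mxof_blk _ (@rows_size_Gm _ _)) row_mx_sub_plotkin.
- rewrite (_ : Negz k - 1 = Negz k.+1); last by lia.
  rewrite /RMmx !submx0 castmx_col_eq0 row_mx_eq0.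
  by case: eqP => [->|]; rewrite ?subr0.
Qed.

Lemma RMmx_plotkin k m :
  (RMmx k m.+1 :=: castmx (erefl, exp2S m) (plotkin_mx (RMmx k m) (RMmx (k - 1) m)))%MS.
Proof.
apply/eqmxP/rV_eqP=> v; have [a [b ->]] := split_rV_exp2S v.
by rewrite castmx_col_submx row_mx_sub_plotkin RMmx_split.
Qed.

Lemma perpmx_RMmx_split k m (a b : 'rV['F_2]_(2 ^ m)) :
  perpmx (castmx (erefl, exp2S m) (row_mx a b)) (RMmx k m.+1) =
  perpmx (a + b) (RMmx k m) && perpmx b (RMmx (k - 1) m).
Proof.
by rewrite (eqmx_perpmx _ (RMmx_plotkin k m)) castmx_col_perpmx perpmx_plotkin.
Qed.

Lemma RMmxB1_sub k m : (RMmx (k - 1) m <= RMmx k m)%MS.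
Proof.
elim: m k => [|m IHm] k.
  case: k => k; first by rewrite /RMmx leq0n submx1.
  by rewrite (_ : Negz k - 1 = Negz k.+1) ?sub0mx //; lia.
apply/rV_subP=> v; have [a [b ->]] := split_rV_exp2S v.
rewrite !RMmx_split => /andP[sub_a sub_ba].
by rewrite (submx_trans sub_a (IHm k)) (submx_trans sub_ba (IHm (k - 1))).
Qed.

Lemma perpmx_RMmx k m (v : 'rV['F_2]_(2 ^ m)) :
  perpmx v (RMmx k m) = (v <= RMmx (m%:Z - k - 1) m)%MS.
Proof.
elim: m k v => [|m IHm] k v.
  case: k => k.
    rewrite (_ : 0 - k%:Z - 1 = Negz k); last by lia.
    by rewrite /RMmx leq0n perpmx1 submx0.
  rewrite (_ : 0 - Negz k - 1 = k%:Z); last by lia.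
  by rewrite /RMmx leq0n perpmx0 submx1.
have [a [b ->]] := split_rV_exp2S v; rewrite perpmx_RMmx_split RMmx_split !IHm.
set s := m%:Z - k.
rewrite (_ : m%:Z - (k - 1) - 1 = s); last by rewrite /s; lia.
rewrite (_ : m.+1%:Z - k - 1 = s); last by rewrite /s; lia.
rewrite (_ : b - a = a + b); last by rewrite oppmx_F2 addrC.
have [sub_ab | _] := boolP ((a + b)%R <= RMmx (s - 1) m)%MS; last by rewrite !andbF.
by rewrite andbC (addmx_sub_eq (submx_trans sub_ab (RMmxB1_sub s m))).
Qed.

Lemma mxof_Gm_subS r m : (r < m)%N ->
  (mxof (2 ^ m) (Gm r m) <= mxof (2 ^ m) (Gm r.+1 m))%MS.
Proof.
move=> lt_r_m; have := RMmxB1_sub r.+1 m.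
by rewrite (_ : r.+1%:Z - 1 = r) ?RMmxE ?(ltnW lt_r_m) //; lia.
Qed.

Lemma mxof_Hm r m : (r <= m)%N -> (mxof (2 ^ m) (Hm r m) :=: mxof (2 ^ m) (Gm r m))%MS.
Proof.
elim: m r => [|m IHm] r le_r_m; first exact: eqmx_refl.
case: r le_r_m => [|r] le_r_m; first exact: eqmx_refl.
have [lt_r1_m | gt_r1_m | <-] := ltngtP r.+1 m; last 2 first.
- have -> : r = m by lia.
  by rewrite /= eqxx; apply: eqmx_refl.
- by rewrite /= eqSS ltn_eqF // eqxx; apply: eqmx_refl.
have IHr1 := IHm r.+1 (ltnW lt_r1_m); have IHr := IHm r (ltnW (ltnW lt_r1_m)).
rewrite HmS // GmS 1?ltnW // !mxof_exp2S; apply: castmx_col_eqmx.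
apply: eqmx_trans (mxof_cat _ _ _) _.
apply: eqmx_trans (adds_eqmx (mxof_blk _ (@rows_size_Hm _ _))
                             (mxof_pad_right (@rows_size_Hm _ _))) _.
have absorb : (row_mx (mxof (2 ^ m) (Hm r m)) 0
               <= plotkin_mx (mxof (2 ^ m) (Hm r.+1 m)) (mxof (2 ^ m) (Hm r m)))%MS.
  rewrite row_mx_sub_plotkin sub0r eqmx_opp submx_refl andbT IHr1 IHr.
  exact: mxof_Gm_subS (ltnW lt_r1_m).
apply: eqmx_trans (elimT addsmx_idPl absorb) _.
apply: eqmx_trans (plotkin_eqmx IHr1 IHr) _.
exact: eqmx_sym (mxof_blk _ (@rows_size_Gm _ _)).
Qed.

Lemma RM_RMmx k m : (k <= m%:Z)%R -> forall v, RM k m v <-> (v <= RMmx k m)%MS.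
Proof.
case: k => k le_k_m v /=; last by rewrite submx0; apply: rwP; apply: eqP.
by rewrite /rowspace RMmxE // -lez_nat.
Qed.

Lemma dualP n (C : code n) p (A : 'M['F_2]_(p, n)) v :
  (forall c, C c <-> (c <= A)%MS) -> dual n C v <-> perpmx v A.
Proof.
move=> defC; split=> [v_perp | /eqP vA0 c /defC /submxP[D ->]]; last first.
  by rewrite trmx_mul mulmxA vA0 mul0mx.
apply/eqP/trmx_inj; rewrite trmx_mul trmxK trmx0; apply/row_matrixP=> j.
have := v_perp _ ((defC _).2 (row_sub j A)).
by rewrite row_mul row0 => /(congr1 trmx); rewrite trmx_mul trmxK trmx0.
Qed.

Theorem proposition10 (r m : nat) :
  (r <= m)%N ->
  generator_matrix (2 ^ m)%N (Hm r m) (RM (Posz r) m) /\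
  parity_check_matrix (2 ^ m)%N (Hm r m) (RM (Posz m - Posz r - 1)%R m).
Proof.
move=> le_r_m; split=> v; rewrite /rowspace (mxof_Hm le_r_m) //.
have le_k_m : (m%:Z - r%:Z - 1 <= m%:Z)%R by lia.
apply: iff_trans (iff_sym (dualP _ (RM_RMmx le_k_m))).
rewrite perpmx_RMmx (_ : m%:Z - (m%:Z - r%:Z - 1) - 1 = r); last by lia.
by rewrite RMmxE.
Qed.
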